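(* Let $(G, I, O)$ be an open graph with $G=(V,E)$, and let $(g, \prec, \lambda)$ be an extended gflow of $(G,I,O)$. Let $(p_i)_{i=1,\dots,|V|}$ be a permutation of $V$ such that for all $i<j$ we have $p_i \not\succ p_j$ (i.e. a linear extension of $\prec$). Then for every $i \in \{1,\dots,|V|-1\}$, the cut-rank $\rho_G(\{p_1,\dots,p_i\})$ is at most $|O|$; that is, $p$ is a linear rank-decomposition of $G$ of width at most $|O|$. *)

From HB Require Import structures.
From mathcomp Require Import all_boot all_order all_algebra.
Set Implicit Arguments. Unset Strict Implicit. Unset Printing Implicit Defensive.
Import GRing.Theory.

Definition simple_graph (V : finType) (e : rel V) : Prop :=
  symmetric e /\ irreflexive e.

Definition odd_nbh (V : finType) (e : rel V) (A : {set V}) : {set V} :=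
  [set v | odd #|[set u in A | e v u]|].

Inductive plane := XY | XZ | YZ.

Definition strict_porder (V : finType) (prec : rel V) : Prop :=
  irreflexive prec /\ transitive prec.

Definition ext_gflow (V : finType) (e : rel V) (I O : {set V})
    (g : V -> {set V}) (prec : rel V) (lam : V -> plane) : Prop :=
  strict_porder prec /\
  forall u, u \notin O ->
    g u \subset ~: I /\
    [/\ (forall v, v \in g u -> v != u -> prec u v),
        (forall v, v \in odd_nbh e (g u) -> v != u -> prec u v),
        (lam u = XY -> u \notin g u /\ u \in odd_nbh e (g u)),
        (lam u = XZ -> u \in g u /\ u \in odd_nbh e (g u)) &
        (lam u = YZ -> u \in g u /\ u \notin odd_nbh e (g u))].

Definition cut_rank (V : finType) (e : rel V) (X : {set V}) : nat :=
  \rank (\matrix_(i < #|X|, j < #|~: X|)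
           ((e (@enum_val V (mem X) i) (@enum_val V (mem (~: X)) j))%:R : 'F_2))%R.

From mathcomp Require Import all_boot all_order all_algebra.
From mathcomp Require Import zify.
Import GRing.Theory.

Set Implicit Arguments.
Unset Strict Implicit.
Unset Printing Implicit Defensive.

(* Let X be an initial segment of the linear extension and Y its complement,
   which is closed upwards under the order. For a non-output u in Y, both g(u)
   and Odd(g(u)) lie in Y, so the indicator vector of g(u) on Y is in the kernel
   of the transposed cut matrix between X and Y over GF(2). The plane condition
   gives, for each such u, a nonzero entry at u in the indicator of g(u) or of
   Odd(g(u)); all other rows vanish there unless their vertex precedes u, so
   these |Y \ O| vectors are linearly independent. Hence the cut rank is at most
   |Y| - |Y \ O| <= |O|. *)

Local Open Scope ring_scope.

Lemma F2_natr_odd (m : nat) : (m%:R : 'F_2) = (odd m)%:R.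
Proof. by rewrite -(Fp_nat_mod (p := 2)) // modn2. Qed.

Lemma F2_natr_bool_neq0 (b : bool) : ((b%:R : 'F_2) != 0) = b.
Proof. by case: b; rewrite ?oner_eq0 ?eqxx. Qed.

Lemma row_free_triangular (F : fieldType) (k n : nat) (M : 'M[F]_(k, n))
    (col : 'I_k -> 'I_n) (rk : 'I_k -> nat) :
  (forall r, M r (col r) != 0) ->
  (forall r r', r' != r -> M r' (col r) != 0 -> (rk r' < rk r)%N) ->
  row_free M.
Proof.
move=> Mdiag Mtri; apply: inj_row_free => w wM0.
apply/rowP => r; rewrite mxE; apply/eqP/negPn/negP => wr.
case: (@arg_minnP _ r (fun r => w 0 r != 0) rk wr) => r0 wr0 r0min.
have := congr1 (fun v : 'rV_n => v 0 (col r0)) wM0.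
rewrite !mxE (bigD1 r0) //= big1 ?addr0 => [w0|r' r'r0].
  by move: w0; apply/eqP; rewrite mulf_eq0 negb_or wr0 Mdiag.
have [->|wr'] := eqVneq (w 0 r') 0; first by rewrite mul0r.
have [->|Mr'] := eqVneq (M r' (col r0)) 0; first by rewrite mulr0.
by have := leq_trans (Mtri _ _ r'r0 Mr') (r0min _ wr'); rewrite ltnn.
Qed.

Lemma row_free_mulr (F : fieldType) (k m n : nat)
    (B : 'M[F]_(k, m)) (K : 'M[F]_(m, n)) :
  row_free (B *m K) -> row_free B.
Proof.
by move=> /eqP BK; rewrite /row_free eqn_leq rank_leq_row -{1}BK mxrankM_maxl.
Qed.

Lemma mxrank_add_row_free_annihilator (F : fieldType) (k m n : nat)
    (A : 'M[F]_(m, n)) (B : 'M[F]_(k, n)) :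
  B *m A^T = 0 -> row_free B -> (\rank A + k <= n)%N.
Proof.
move=> BA0 /eqP freeB.
have : (\rank B <= \rank (kermx A^T))%N by apply/mxrankS/sub_kermxP.
by rewrite mxrank_ker mxrank_tr freeB; have := rank_leq_col A; lia.
Qed.

Lemma sum_mem_adj_F2 (V : finType) (e : rel V) (Y S : {set V}) (x : V) :
  S \subset Y ->
  \sum_(j < #|Y|) (enum_val j \in S)%:R * (e x (enum_val j))%:R
    = (x \in odd_nbh e S)%:R :> 'F_2.
Proof.
move=> SY; under eq_bigr => j _ do rewrite -natrM mulnb.
rewrite [x \in _]inE -natr_sum F2_natr_odd.
have -> : [set u in S | e x u] =
    enum_val @: [set j : 'I_#|Y| | (enum_val j \in S) && e x (enum_val j)].
  apply/setP => u; rewrite !inE; apply/andP/imsetP => [[uS exu]|[j]].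
    have uY : u \in Y by apply: (subsetP SY).
    by exists (enum_rank_in uY u); rewrite ?inE enum_rankK_in ?uS.
  by rewrite inE => /andP[jS exj] ->.
rewrite card_imset; last exact: enum_val_inj.
by rewrite -sum1dep_card [in RHS]big_mkcond.
Qed.

Lemma ext_gflow_closed (V : finType) (e : rel V) (I O : {set V})
    (g : V -> {set V}) (prec : rel V) (lam : V -> plane) (S : {set V}) (u : V) :
  ext_gflow e I O g prec lam ->
  (forall x y, x \in S -> prec x y -> y \in S) ->
  u \in S -> u \notin O ->
  g u \subset S /\ odd_nbh e (g u) \subset S.
Proof.
move=> [_ gf] closedS uS uO; have [_ [gprec oddprec _ _ _]] := gf u uO.
by split; apply/subsetP => v hv; have [->//|vu] := eqVneq v u;
  apply: (closedS u) => //; [exact: gprec | exact: oddprec].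
Qed.

Section GflowCutRank.

Variables (V : finType) (e : rel V) (I O : {set V}) (g : V -> {set V}).
Variables (prec : rel V) (lam : V -> plane) (rk : V -> nat) (X : {set V}).
Hypothesis gf : ext_gflow e I O g prec lam.
Hypothesis prec_rk : forall a b, prec a b -> (rk a < rk b)%N.
Hypothesis future_closed : forall x y, x \in ~: X -> prec x y -> y \in ~: X.

Local Notation Y := (~: X).
Local Notation yv := (@enum_val V (mem Y)).
Local Notation uv := (@enum_val V (mem (Y :\: O))).

Definition cut_mx : 'M['F_2]_(#|X|, #|Y|) :=
  \matrix_(i, j) (e (enum_val i) (enum_val j))%:R.
Definition adj_mx : 'M['F_2]_#|Y| := \matrix_(j, j') (e (yv j') (yv j))%:R.

Definition gflow_mx : 'M['F_2]_(#|Y :\: O|, #|Y|) :=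
  \matrix_(r, j) (yv j \in g (uv r))%:R.
Definition odd_gflow_mx : 'M['F_2]_(#|Y :\: O|, #|Y|) :=
  \matrix_(r, j) (yv j \in odd_nbh e (g (uv r)))%:R.

Lemma enum_nonoutputP r : uv r \in Y /\ uv r \notin O.
Proof. by have := enum_valP r; rewrite inE => /andP[]. Qed.

Lemma gflow_sub_future r : g (uv r) \subset Y /\ odd_nbh e (g (uv r)) \subset Y.
Proof.
have [uY uO] := enum_nonoutputP r.
exact: ext_gflow_closed gf future_closed uY uO.
Qed.

Lemma gflow_mx_adj : gflow_mx *m adj_mx = odd_gflow_mx.
Proof.
apply/matrixP => r j'; rewrite !mxE.
rewrite -(sum_mem_adj_F2 e _ (gflow_sub_future r).1).
by apply: eq_bigr => j _; rewrite !mxE.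
Qed.

Lemma gflow_mx_cut : gflow_mx *m cut_mx^T = 0.
Proof.
apply/matrixP => r l; rewrite !mxE.
under eq_bigr => j _ do rewrite !mxE.
rewrite (sum_mem_adj_F2 e _ (gflow_sub_future r).1).
case: (boolP (_ \in odd_nbh e _)) => // /(subsetP (gflow_sub_future r).2).
by rewrite inE (enum_valP l).
Qed.

(* The measurement plane of u selects whether the nonzero entry at u sits in
   the indicator of g(u) (planes XZ, YZ) or of Odd(g(u)) (plane XY). *)
Lemma row_free_gflow_odd : row_free (row_mx gflow_mx odd_gflow_mx).
Proof.
pose ju r : 'I_#|Y| := enum_rank_in (enum_nonoutputP r).1 (uv r).
pose col r := if lam (uv r) is XY then rshift _ (ju r) else lshift _ (ju r).
have Mcol r r' : row_mx gflow_mx odd_gflow_mx r' (col r) =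
    (uv r \in if lam (uv r) is XY then odd_nbh e (g (uv r')) else g (uv r'))%:R.
  rewrite /col; case: (lam _); rewrite ?row_mxEl ?row_mxEr mxE /ju;
  by rewrite (enum_rankK_in _ (enum_nonoutputP r).1).
apply: (row_free_triangular (col := col) (rk := rk \o uv)) => [r|r r' r'r].
  have [_ [_ _ hXY hXZ hYZ]] := gf.2 _ (enum_nonoutputP r).2.
  rewrite Mcol F2_natr_bool_neq0.
  by case E: (lam _); [case: (hXY E) | case: (hXZ E) | case: (hYZ E)].
have uv_neq : uv r != uv r' by apply: contraNneq r'r => /enum_val_inj ->.
have [_ [gprec oddprec _ _ _]] := gf.2 _ (enum_nonoutputP r').2.
rewrite Mcol F2_natr_bool_neq0 => hr; apply: prec_rk.
by case: (lam _) hr => hr; [exact: oddprec | exact: gprec | exact: gprec].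
Qed.

Lemma row_free_gflow_mx : row_free gflow_mx.
Proof.
apply: (row_free_mulr (K := row_mx 1 adj_mx)).
by rewrite mul_mx_row mulmx1 gflow_mx_adj row_free_gflow_odd.
Qed.

Lemma cut_rank_le_outputs : (cut_rank e X <= #|O|)%N.
Proof.
have := mxrank_add_row_free_annihilator gflow_mx_cut row_free_gflow_mx.
have := cardsID O Y; have := subset_leq_card (subsetIr Y O).
rewrite /cut_rank -/cut_mx; lia.
Qed.

End GflowCutRank.

Lemma linear_extension_lt (T : Type) (n : nat) (prec : rel T) (p : 'I_n -> T) :
  irreflexive prec ->
  (forall i j : 'I_n, (i < j)%N -> ~~ prec (p j) (p i)) ->
  forall i j, prec (p i) (p j) -> (i < j)%N.
Proof.
move=> irr lin i j pij; rewrite ltnNge leq_eqVlt.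
apply/negP => /orP[/eqP/val_inj ji|ji].
  by move: pij; rewrite ji irr.
by move: (lin _ _ ji); rewrite pij.
Qed.

Theorem lemma1 (V : finType) (e : rel V) (I O : {set V})
    (g : V -> {set V}) (prec : rel V) (lam : V -> plane)
    (p : 'I_#|V| -> V) :
  simple_graph e ->
  ext_gflow e I O g prec lam ->
  bijective p ->
  (forall i j : 'I_#|V|, (i < j)%N -> ~~ prec (p j) (p i)) ->
  forall i : nat, (1 <= i)%N -> (i <= #|V| - 1)%N ->
    (cut_rank e [set p k | k : 'I_#|V| & (k < i)%N] <= #|O|)%N.
Proof.
move=> _ gf [pinv pK pinvK] lin i _ _; have [[irr _] _] := gf.
have prec_pinv a b : prec a b -> (pinv a < pinv b)%N.
  by move=> ab; apply: linear_extension_lt irr lin _ _ _; rewrite !pinvK.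
have mem_prefix x : (x \in [set p k | k : 'I_#|V| & (k < i)%N]) = (pinv x < i)%N.
  apply/imsetP/idP => [[k]|xi]; first by rewrite inE => ki ->; rewrite pK.
  by exists (pinv x); rewrite ?inE ?pinvK.
apply: (cut_rank_le_outputs (rk := fun x => nat_of_ord (pinv x)) gf) => //.
move=> x y; rewrite !inE !mem_prefix -!leqNgt => ix /prec_pinv xy.
exact: leq_trans ix (ltnW xy).
Qed.
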